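(* Let $\pi$ be a supercuspidal representation of $G$ with trivial central character and $a(\pi)=4n$, $n\ge1$, let $T$ be an inert torus in canonical form, let $\chi_\pi=\chi_{\theta_\pi,T}$, and let $v_0\in\pi$ be a minimal vector for $T$. Let $\Phi_0(g)=\langle\pi(g)v_0,v_0\rangle/\langle v_0,v_0\rangle$, where $\langle\cdot,\cdot\rangle$ is a $G$-invariant inner product on $\pi$. Then $\Phi_0(g)=\chi_\pi(g)$ for $g\in ZK_T(n)$ and $\Phi_0(g)=0$ for $g\notin ZK_T(n)$.
   Context: $F$ is a non-archimedean local field of characteristic zero with ring of integers $\mathfrak o$, maximal ideal $\mathfrak p$, uniformizer $\varpi$, odd residue cardinality; $E$ the unramified quadratic extension; $G=\mathrm{GL}_2(F)$, $Z$ its centre. $\psi$ is an additive character of $F$ trivial on $\mathfrak o$ but not $\varpi^{-1}\mathfrak o$, $\psi_E=\psi\circ\mathrm{Tr}_{E/F}$. $a(\pi)$ is the conductor exponent of $\pi$; for a character $\chi$ of $E^\times$, $a(\chi)$ is the least $m\ge0$ with $\chi$ trivial on $\{x\in\mathfrak o_E^\times:v(x-1)\ge m\}$. Inert torus in canonical form: $T=T_\alpha=\{\begin{pmatrix}x&y\\-\alpha y&x\end{pmatrix}\ne0\}$, $\alpha\in\mathfrak o^\times$, $-\alpha$ non-square, identified with $E^\times$ via $x+y\sqrt{-\alpha}\mapsto\begin{pmatrix}x&y\\-\alpha y&x\end{pmatrix}$; $w_\alpha=\begin{pmatrix}0&1\\-\alpha&0\end{pmatrix}$; $K(n)=\{g\in\mathrm{GL}_2(\mathfrak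 o):g\equiv1\bmod\mathfrak p^n\}$; $K_T(n)=\{\begin{pmatrix}a&b\\c&d\end{pmatrix}\in\mathrm{GL}_2(\mathfrak o):a-d,\ c+b\alpha\in\mathfrak p^n\}$, $ZK_T(n)=TK(n)$. For $\theta$ with $a(\theta)=2n$, $\theta|_{F^\times}=1$: fix $a_{\theta,T}\in\mathfrak o^\times$ with $\psi_E(\varpi^{-n}a_{\theta,T}\sqrt{-\alpha}u)=\theta(1+\varpi^nu)$ ($u\in\mathfrak o_E$), and $\chi_{\theta,T}(t(1+\varpi^ng))=\theta(t)\psi(\varpi^{-n}a_{\theta,T}\mathrm{Tr}(w_\alpha g))$, a character of $ZK_T(n)$. $\theta_\pi$ is a fixed character of $E^\times$ with $a(\theta_\pi)=2n$, $\theta_\pi|_{F^\times}=1$ and $\pi\simeq c\text{-}\mathrm{Ind}_{ZK_T(n)}^G\chi_{\theta_\pi,T}$ for all such $T$. A minimal vector for $T$ is a nonzero $v\in\pi$ with $\pi(k)v=\chi_{\theta_\pi,T}(k)v$ for all $k\in ZK_T(n)$. *)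

From HB Require Import structures.
From mathcomp Require Import all_boot all_order all_algebra.
Set Implicit Arguments. Unset Strict Implicit. Unset Printing Implicit Defensive.
Import Order.TTheory GRing.Theory Num.Theory.
Local Open Scope ring_scope.

(* Non-archimedean local fields, given by a normalized discrete        *)
(* valuation v : F -> int (the value v 0 is irrelevant: 0 is treated   *)
(* as having valuation +oo through [val_ge]).                          *)
Section LocalField.
Variables (F : fieldType) (v : F -> int).

Definition val_ge (x : F) (m : int) : bool := (x == 0) || (m <= v x).

Definition in_o (x : F) : bool := val_ge x 0.

Definition unit_o (x : F) : bool := (x != 0) && (v x == 0).

Definition is_dvaluation : Prop :=
  (forall x y, x != 0 -> y != 0 -> v (x * y) = v x + v y) /\
  (forall x y m, val_ge x m -> val_ge y m -> val_ge (x + y) m).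

Definition val_cauchy (u : nat -> F) : Prop :=
  forall m : int, exists N : nat, forall i j : nat, (N <= i)%N -> (N <= j)%N ->
    val_ge (u i - u j) m.

Definition val_converges (u : nat -> F) (l : F) : Prop :=
  forall m : int, exists N : nat, forall i : nat, (N <= i)%N -> val_ge (u i - l) m.

Definition val_complete : Prop :=
  forall u, val_cauchy u -> exists l, val_converges u l.

Definition residue_card (q : nat) : Prop :=
  exists s : seq F, size s = q /\ (forall x, x \in s -> in_o x) /\
    (forall i j, (i < q)%N -> (j < q)%N -> val_ge (s`_i - s`_j) 1 -> i = j) /\
    (forall x, in_o x -> exists2 y, y \in s & val_ge (x - y) 1).

Definition char0 : Prop := forall k : nat, (k.+1)%:R != 0 :> F.

Definition nonarch_local_field_odd (unif : F) : Prop :=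
  [/\ is_dvaluation, unif != 0 /\ v unif = 1, val_complete, char0 &
      exists q, residue_card q /\ odd q].

Definition std_add_char (C : fieldType) (psi : F -> C) : Prop :=
  [/\ forall x y, psi (x + y) = psi x * psi y,
      forall x, in_o x -> psi x = 1 &
      exists x, val_ge x (-1) /\ psi x != 1].

(* E = F(sqrt(-alpha)), elements x + y sqrt(-alpha) written as (x, y). *)
(* When alpha in o^x and -alpha is a non-square, E/F is the unramified  *)
(* quadratic extension and v_E(x + y sqrt(-alpha)) = min(v x, v y).      *)
Variable alpha : F.

Definition eadd (e1 e2 : F * F) : F * F := (e1.1 + e2.1, e1.2 + e2.2).
Definition emul (e1 e2 : F * F) : F * F :=
  (e1.1 * e2.1 - alpha * (e1.2 * e2.2), e1.1 * e2.2 + e1.2 * e2.1).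
Definition escal (c : F) : F * F := (c, 0).
Definition esqrt : F * F := (0, 1).
Definition etr (e : F * F) : F := e.1 *+ 2.

Definition vE_ge (e : F * F) (m : int) : bool := val_ge e.1 m && val_ge e.2 m.
Definition in_oE (e : F * F) : bool := vE_ge e 0.
Definition unit_oE (e : F * F) : bool := vE_ge e 0 && ~~ vE_ge e 1.
Definition UE (m : nat) (e : F * F) : bool :=
  unit_oE e && vE_ge (eadd e (escal (-1))) m%:Z.

Definition is_charE (C : fieldType) (theta : F * F -> C) : Prop :=
  (forall e, e != (0, 0) -> theta e != 0) /\
  (forall e1 e2, e1 != (0, 0) -> e2 != (0, 0) ->
     theta (emul e1 e2) = theta e1 * theta e2).

Definition trivial_on_UE (C : fieldType) (theta : F * F -> C) (m : nat) : Prop :=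
  forall e, UE m e -> theta e = 1.

Definition conductorE (C : fieldType) (theta : F * F -> C) (m : nat) : Prop :=
  trivial_on_UE theta m /\ forall m', (m' < m)%N -> ~ trivial_on_UE theta m'.

(* GL_2(F) inside 'M[F]_2 (elements are the matrices in unitmx).       *)
Definition mx2 (a b c d : F) : 'M[F]_2 :=
  \matrix_(i < 2, j < 2)
    if i == ord0 then (if j == ord0 then a else b) else (if j == ord0 then c else d).

(* the torus T_alpha, identified with E^x *)
Definition tmat (e : F * F) : 'M[F]_2 := mx2 e.1 e.2 (- alpha * e.2) e.1.
Definition walpha : 'M[F]_2 := mx2 0 1 (- alpha) 0.

Definition in_M2o (g : 'M[F]_2) : Prop := forall i j, in_o (g i j).
Definition in_GL2o (g : 'M[F]_2) : Prop := in_M2o g /\ unit_o (\det g).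

Definition Kn (n : nat) (g : 'M[F]_2) : Prop :=
  in_GL2o g /\ forall i j, val_ge ((g - 1) i j) n%:Z.

(* Z K_T(n) = T K(n) *)
Definition ZKT (n : nat) (g : 'M[F]_2) : Prop :=
  exists2 e, e != (0, 0) & exists2 k, Kn n k & g = tmat e * k.

Definition is_chi_theta_T (C : fieldType) (unif : F) (n : nat)
   (theta : F * F -> C) (psi : F -> C) (a : F) (chi : 'M[F]_2 -> C) : Prop :=
  forall e g, e != (0, 0) -> in_M2o g ->
    chi (tmat e * (1 + unif ^+ n *: g)) =
      theta e * psi (unif ^- n * a * \tr (walpha * g)).

(* elements of c-Ind_H^G chi, realized as functions on 'M[F]_2 vanishing *)
(* outside GL_2(F), left (H,chi)-equivariant, compactly supported mod H.  *)
Definition in_cInd (C : fieldType) (H : 'M[F]_2 -> Prop) (chi : 'M[F]_2 -> C)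
   (f : 'M[F]_2 -> C) : Prop :=
  [/\ forall g, g \notin unitmx -> f g = 0,
      forall k g, H k -> g \in unitmx -> f (k * g) = chi k * f g &
      exists gs : seq 'M[F]_2, forall g, f g != 0 ->
         exists2 h, h \in gs & exists2 k, H k & g = k * h].

Definition is_rep (C : fieldType) (V : lmodType C) (rho : 'M[F]_2 -> V -> V) : Prop :=
  [/\ forall g, g \in unitmx -> forall c (x y : V), rho g (c *: x + y) = c *: rho g x + rho g y,
      forall x, rho 1 x = x &
      forall g h, g \in unitmx -> h \in unitmx -> forall x, rho (g * h) x = rho g (rho h x)].

Definition iso_cInd (C : fieldType) (V : lmodType C) (rho : 'M[F]_2 -> V -> V)
   (H : 'M[F]_2 -> Prop) (chi : 'M[F]_2 -> C) : Prop :=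
  exists Phi : V -> 'M[F]_2 -> C,
    [/\ forall c x y, Phi (c *: x + y) = (fun g => c * Phi x g + Phi y g),
        injective Phi,
        forall x, in_cInd H chi (Phi x),
        forall f, in_cInd H chi f -> exists x, Phi x = f &
        forall g x, g \in unitmx -> Phi (rho g x) = (fun h => Phi x (h * g))].

End LocalField.

Definition is_inv_inner_product (F : fieldType) (C : numClosedFieldType) (V : lmodType C)
   (rho : 'M[F]_2 -> V -> V) (ip : V -> V -> C) : Prop :=
  [/\ forall c x y z, ip (c *: x + y) z = c * ip x z + ip y z,
      forall x y, ip y x = (ip x y)^*,
      forall x, x != 0 -> 0 < ip x x &
      forall g, g \in unitmx -> forall x y, ip (rho g x) (rho g y) = ip x y].

From HB Require Import structures.
From mathcomp Require Import all_boot all_order all_algebra.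
From mathcomp Require Import ring zify.
Set Implicit Arguments. Unset Strict Implicit. Unset Printing Implicit Defensive.
Import Order.TTheory GRing.Theory Num.Theory.
Local Open Scope ring_scope.

(* For g outside ZK_T(n) we find k1, k2 in ZK_T(n) with k1 g = g k2 and chi(k1) <> chi(k2).
   Since v0 is an eigenvector of both and chi is unitary, invariance of the inner product gives
   chi(k1) <pi(g)v0, v0> = chi(k2) <pi(g)v0, v0>, so the coefficient vanishes; on ZK_T(n) it is
   chi by minimality of v0.  We take k_i = 1 + unif^n x Y_i with integral Y_1 g = g Y_2, so that
   chi(k_i) = psi(unif^-n a x Tr(w_alpha Y_i)); a suitable integral x separates the two values as
   soon as Tr(w_alpha (Y_1 - Y_2)) has valuation < n.  Such Y_i are read off from the entries of
   g, scaled to be primitive: Y_1 = det(g) E and Y_2 = adj(g) E g when det g lies in p, and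
   monomial matrices when det g is a unit and one of the congruences defining ZK_T(n) fails.  The
   first case needs x^2 + alpha y^2 to be a unit when x or y is 1, i.e. -alpha not a square mod p;
   this follows from Newton's iteration since 2 is a unit, and 2 is a unit because otherwise
   theta would already be trivial on U_E(2n - 1), contradicting a(theta) = 2n. *)

Section TwoByTwo.
Variable F : fieldType.
Implicit Types (a b c d x : F) (A : 'M[F]_2).

Lemma ord2P (i : 'I_2) : i = 0 \/ i = 1.
Proof. by case: i => [[|[|k]]] Hi //; [left|right]; apply: val_inj. Qed.

Lemma mx2_00 a b c d : mx2 a b c d 0 0 = a. Proof. by rewrite mxE. Qed.
Lemma mx2_01 a b c d : mx2 a b c d 0 1 = b. Proof. by rewrite mxE. Qed.
Lemma mx2_10 a b c d : mx2 a b c d 1 0 = c. Proof. by rewrite mxE. Qed.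
Lemma mx2_11 a b c d : mx2 a b c d 1 1 = d. Proof. by rewrite mxE. Qed.
Definition mx2E := (mx2_00, mx2_01, mx2_10, mx2_11).

Lemma ord2_ind2 (P : 'I_2 -> 'I_2 -> Prop) :
  P 0 0 -> P 0 1 -> P 1 0 -> P 1 1 -> forall i j, P i j.
Proof. by move=> ? ? ? ? i j; case: (ord2P i) => ->; case: (ord2P j) => ->. Qed.

Lemma mx2_eta A : A = mx2 (A 0 0) (A 0 1) (A 1 0) (A 1 1).
Proof. by apply/matrixP; apply: ord2_ind2; rewrite !mxE. Qed.

Lemma mx2_eq a b c d a' b' c' d' :
  a = a' -> b = b' -> c = c' -> d = d' -> mx2 a b c d = mx2 a' b' c' d'.
Proof. by move=> -> -> -> ->. Qed.

Lemma mx2_mul a b c d a' b' c' d' :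
  mx2 a b c d * mx2 a' b' c' d' =
  mx2 (a * a' + b * c') (a * b' + b * d') (c * a' + d * c') (c * b' + d * d').
Proof.
apply/matrixP; rewrite -mulmxE; apply: ord2_ind2;
  by rewrite !mxE !big_ord_recr big_ord0 /= add0r !mxE.
Qed.

Lemma mx2_add a b c d a' b' c' d' :
  mx2 a b c d + mx2 a' b' c' d' = mx2 (a + a') (b + b') (c + c') (d + d').
Proof. by apply/matrixP; apply: ord2_ind2; rewrite !mxE. Qed.

Lemma mx2_sub a b c d a' b' c' d' :
  mx2 a b c d - mx2 a' b' c' d' = mx2 (a - a') (b - b') (c - c') (d - d').
Proof. by apply/matrixP; apply: ord2_ind2; rewrite !mxE. Qed.

Lemma mx2_scale x a b c d : x *: mx2 a b c d = mx2 (x * a) (x * b) (x * c) (x * d).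
Proof. by apply/matrixP; apply: ord2_ind2; rewrite !mxE. Qed.

Lemma mx2_1 : (1 : 'M[F]_2) = mx2 1 0 0 1.
Proof. by apply/matrixP; apply: ord2_ind2; rewrite !mxE. Qed.

Lemma mx2_det a b c d : \det (mx2 a b c d) = a * d - b * c.
Proof.
rewrite (expand_det_row _ 0) !big_ord_recr big_ord0 /= add0r.
by rewrite /cofactor !det_mx11 !mxE /= !add0n expr0 expr1; ring.
Qed.

Lemma mx2_tr a b c d : \tr (mx2 a b c d) = a + d.
Proof. by rewrite /mxtrace !big_ord_recr big_ord0 /= add0r !mxE. Qed.

End TwoByTwo.

Section Valuation.
Variables (F : fieldType) (v : F -> int).
Hypothesis vM : forall x y : F, x != 0 -> y != 0 -> v (x * y) = v x + v y.
Hypothesis val_geD :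
  forall (x y : F) m, val_ge v x m -> val_ge v y m -> val_ge v (x + y) m.
Implicit Types (x y z t : F) (m k : int).

Lemma v1 : v 1 = 0.
Proof.
have := vM (oner_neq0 F) (oner_neq0 F); rewrite mulr1 => h.
by apply/(addrI (v 1)); rewrite addr0 -h.
Qed.

Lemma vN x : v (- x) = v x.
Proof.
have [->|x0] := eqVneq x 0; first by rewrite oppr0.
have N10 : (-1 : F) != 0 by rewrite oppr_eq0 oner_neq0.
have vN1 : v (-1) = 0 by have := vM N10 N10; rewrite mulrNN mulr1 v1; lia.
by rewrite -mulN1r vM // vN1 add0r.
Qed.

Lemma vV x : x != 0 -> v x^-1 = - v x.
Proof. by move=> x0; have := vM x0 (invr_neq0 x0); rewrite mulfV // v1; lia. Qed.

Lemma val_ge0 m : val_ge v 0 m.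
Proof. by rewrite /val_ge eqxx. Qed.

Lemma val_geP x m : x != 0 -> val_ge v x m = (m <= v x).
Proof. by rewrite /val_ge => /negbTE ->. Qed.

Lemma val_ge_neq0 x m : ~ val_ge v x m -> x != 0.
Proof. by apply: contra_notN => /eqP ->; apply: val_ge0. Qed.

Lemma val_ge_self x : val_ge v x (v x).
Proof. by rewrite /val_ge lexx orbT. Qed.

Lemma val_ge_le x m k : val_ge v x m -> k <= m -> val_ge v x k.
Proof. by rewrite /val_ge => /orP[-> //|h] hk; rewrite (le_trans hk h) orbT. Qed.

Lemma val_geN x m : val_ge v x m -> val_ge v (- x) m.
Proof. by rewrite /val_ge oppr_eq0 vN. Qed.

Lemma val_geB x y m : val_ge v x m -> val_ge v y m -> val_ge v (x - y) m.
Proof. by move=> hx hy; apply/val_geD/val_geN. Qed.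

Lemma val_geM x y m k : val_ge v x m -> val_ge v y k -> val_ge v (x * y) (m + k).
Proof.
have [->|x0] := eqVneq x 0; first by move=> *; rewrite mul0r val_ge0.
have [->|y0] := eqVneq y 0; first by move=> *; rewrite mulr0 val_ge0.
by rewrite !val_geP ?mulf_neq0 // vM //; lia.
Qed.

Lemma val_geMl x y m : in_o v x -> val_ge v y m -> val_ge v (x * y) m.
Proof. by move=> hx hy; have := val_geM hx hy; rewrite add0r. Qed.

Lemma val_geMr x y m : val_ge v x m -> in_o v y -> val_ge v (x * y) m.
Proof. by move=> hx hy; have := val_geM hx hy; rewrite addr0. Qed.

Lemma val_ge_eq0 x : (forall m, 0 <= m -> val_ge v x m) -> x = 0.
Proof.
move=> hx; apply/eqP/negP => /negP x0.
by have := hx (`|v x|%N%:Z + 1) ltac:(lia); rewrite val_geP //; lia.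
Qed.

Lemma in_o_val_ge x m : val_ge v x m -> 0 <= m -> in_o v x.
Proof. exact: val_ge_le. Qed.

Lemma in_o0 : in_o v 0. Proof. exact: val_ge0. Qed.
Lemma in_o1 : in_o v 1. Proof. by rewrite /in_o val_geP ?oner_neq0 // v1. Qed.
Lemma in_oN x : in_o v x -> in_o v (- x). Proof. exact: val_geN. Qed.
Lemma in_oD x y : in_o v x -> in_o v y -> in_o v (x + y). Proof. exact: val_geD. Qed.
Lemma in_oB x y : in_o v x -> in_o v y -> in_o v (x - y). Proof. exact: val_geB. Qed.
Lemma in_oM x y : in_o v x -> in_o v y -> in_o v (x * y). Proof. exact: val_geM. Qed.

Lemma unit_oP x : unit_o v x <-> in_o v x /\ ~ val_ge v x 1.
Proof.
rewrite /unit_o /in_o; split=> [/andP[x0 /eqP vx]|[h1 h2]].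
  by rewrite !val_geP // vx.
have x0 := val_ge_neq0 h2.
by move: h1 h2; rewrite !val_geP // x0 => *; apply/eqP; lia.
Qed.

Lemma unit_o_neq0 x : unit_o v x -> x != 0.
Proof. by case/andP. Qed.

Lemma unit_o_in x : unit_o v x -> in_o v x.
Proof. by case/unit_oP. Qed.

Lemma unit_o1 : unit_o v 1.
Proof. by rewrite /unit_o oner_neq0 v1. Qed.

Lemma unit_oM x y : unit_o v x -> unit_o v y -> unit_o v (x * y).
Proof.
rewrite /unit_o => /andP[x0 /eqP vx] /andP[y0 /eqP vy].
by rewrite mulf_neq0 //= vM // vx vy.
Qed.

Lemma unit_oV x : unit_o v x -> unit_o v x^-1.
Proof. by rewrite /unit_o => /andP[x0 /eqP vx]; rewrite invr_eq0 x0 vV // vx. Qed.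

Lemma unit_oDr x t : unit_o v x -> val_ge v t 1 -> unit_o v (x + t).
Proof.
move=> /unit_oP[hx nx] ht; apply/unit_oP; split.
  by apply: in_oD => //; apply: in_o_val_ge ht _.
by move=> h; apply: nx; rewrite -(addrK t x); apply: val_geB.
Qed.

Lemma in_M2o_mx2 a b c d : in_o v a -> in_o v b -> in_o v c -> in_o v d ->
  in_M2o v (mx2 a b c d).
Proof. by move=> *; apply: ord2_ind2; rewrite !mx2E. Qed.

Lemma in_M2oZ x (Y : 'M[F]_2) : in_o v x -> in_M2o v Y -> in_M2o v (x *: Y).
Proof. by move=> hx hY i j; rewrite mxE; apply: in_oM. Qed.

Lemma in_M2oM (A B : 'M[F]_2) : in_M2o v A -> in_M2o v B -> in_M2o v (A * B).
Proof.
move=> hA hB; rewrite (mx2_eta A) (mx2_eta B) mx2_mul.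
by apply: in_M2o_mx2; apply: in_oD; apply: in_oM.
Qed.

Lemma val_cauchy_step (u : nat -> F) :
  (forall k : nat, val_ge v (u k.+1 - u k) k.+1) -> val_cauchy v u.
Proof.
move=> hu.
have tele j d : val_ge v (u (j + d)%N - u j) j.+1.
  elim: d => [|d IH]; first by rewrite addn0 subrr val_ge0.
  rewrite addnS -(subrK (u (j + d)%N) (u _)) -addrA.
  by apply: val_geD IH; apply: val_ge_le (hu _) _; lia.
move=> m; exists `|m|%N => i j hi hj.
have near (l : nat) : (`|m| <= l)%N -> val_ge v (u l - u `|m|%N) m.
  by move=> hk; rewrite -(subnKC hk); apply: val_ge_le (tele _ _) _; lia.
have -> : u i - u j = (u i - u `|m|%N) - (u j - u `|m|%N).
  by rewrite opprB addrA subrK.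
by apply: val_geB; apply: near.
Qed.

Lemma seq_min_val (s : seq F) : has (fun x => x != 0) s ->
  exists c, [/\ c \in s, c != 0 & forall x, x \in s -> val_ge v x (v c)].
Proof.
elim: s => [//|x s IH] /=.
have [->|x0 _] := eqVneq x 0.
  move=> /= /IH[c [cs c0 hc]].
  exists c; split=> //; first by rewrite inE cs orbT.
  by move=> y; rewrite inE => /orP[/eqP->|/hc //]; rewrite val_ge0.
have [hs'|hs'] := boolP (has (fun x => x != 0) s); last first.
  exists x; split; rewrite ?inE ?eqxx // => y; rewrite inE => /orP[/eqP->|ys].
    exact: val_ge_self.
  by move: hs'; rewrite -all_predC => /allP /(_ y ys) /= /negPn /eqP ->; apply: val_ge0.
have [c [cs c0 hc]] := IH hs'.
have [le|lt] := lerP (v c) (v x).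
  exists c; split; rewrite ?inE ?cs ?orbT // => y; rewrite inE.
  by case/orP=> [/eqP->|/hc //]; rewrite val_geP.
exists x; split; rewrite ?inE ?eqxx // => y; rewrite inE.
case/orP=> [/eqP->|/hc h]; first exact: val_ge_self.
exact: val_ge_le h (ltW lt).
Qed.

Variable unif : F.
Hypothesis unif_neq0 : unif != 0.
Hypothesis v_unif : v unif = 1.

Lemma unifX_neq0 (k : nat) : unif ^+ k != 0.
Proof. exact: expf_neq0. Qed.

Lemma v_unifX (k : nat) : v (unif ^+ k) = k%:Z.
Proof.
elim: k => [|k IH]; first by rewrite expr0 v1.
by rewrite exprS vM ?unifX_neq0 // IH v_unif; lia.
Qed.

Lemma val_ge_unifX (k : nat) : val_ge v (unif ^+ k) k%:Z.
Proof. by rewrite val_geP ?unifX_neq0 // v_unifX. Qed.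

Lemma val_ge_unifXV (k : nat) : val_ge v (unif ^- k) (- k%:Z).
Proof. by rewrite val_geP ?invr_eq0 ?unifX_neq0 // vV ?unifX_neq0 // v_unifX. Qed.

(** * The groups K(n) and ZK_T(n) *)

Variable n : nat.
Hypothesis n_gt0 : (0 < n)%N.

Lemma unit_o_not_val_ge x : unit_o v x -> ~ val_ge v x n%:Z.
Proof. by case/unit_oP=> _ nx hx; apply: nx; apply: val_ge_le hx _; lia. Qed.

Lemma Kn_mx2 a b c d : val_ge v a n%:Z -> val_ge v b n%:Z -> val_ge v c n%:Z ->
  val_ge v d n%:Z -> Kn v n (mx2 (1 + a) b c (1 + d)).
Proof.
move=> ha hb hc hd.
have hn : 0 <= n%:Z by [].
have [ia ib ic id] := And4 (in_o_val_ge ha hn) (in_o_val_ge hb hn)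
  (in_o_val_ge hc hn) (in_o_val_ge hd hn).
split; first split.
- by apply: in_M2o_mx2; rewrite // in_oD // in_o1.
- rewrite mx2_det.
  have -> : (1 + a) * (1 + d) - b * c = 1 + (a + d * (1 + a) - b * c) by ring.
  apply: unit_oDr unit_o1 _; apply: (@val_ge_le _ n%:Z); last by lia.
  by apply: val_geB (val_geMr hb ic); apply: val_geD ha (val_geMr hd (in_oD in_o1 ia)).
- rewrite mx2_1 mx2_sub !subr0 ![1 + _]addrC !addrK.
  by apply: ord2_ind2; rewrite !mx2E.
Qed.

Lemma Kn_1_unifXZ (Y : 'M[F]_2) : in_M2o v Y -> Kn v n (1 + unif ^+ n *: Y).
Proof.
move=> hY; rewrite (mx2_eta Y) mx2_scale mx2_1 mx2_add !add0r.
by apply: Kn_mx2; apply: val_geMr (val_ge_unifX n) (hY _ _).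
Qed.

Variable alpha : F.
Hypothesis alpha_unit : unit_o v alpha.
Hypothesis alpha_nonsq : forall z : F, z * z != - alpha.

Lemma tmat_det (e : F * F) : \det (tmat alpha e) = e.1 * e.1 + alpha * (e.2 * e.2).
Proof. by rewrite /tmat mx2_det /=; ring. Qed.

Lemma tmat_scale x (e : F * F) : tmat alpha (x * e.1, x * e.2) = x *: tmat alpha e.
Proof. by rewrite /tmat mx2_scale /=; apply: mx2_eq; ring. Qed.

Lemma tmat1 : tmat alpha (1, 0) = 1.
Proof. by rewrite /tmat mx2_1 /=; apply: mx2_eq; ring. Qed.

Lemma norm_form_neq0 (e : F * F) : e != (0, 0) -> e.1 * e.1 + alpha * (e.2 * e.2) != 0.
Proof.
case: e => x y /= e0.
have [y0|y0] := eqVneq y 0.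
  by rewrite y0 !mul0r mulr0 addr0 mulf_neq0 //; apply: contra_neq e0 => ->; rewrite y0.
apply: contra_neq (alpha_nonsq (x / y)) => h.
have hx : x * x = - alpha * (y * y).
  by rewrite mulNr -[x * x](addrK (alpha * (y * y))) h sub0r.
by rewrite mulf_div hx -mulrA divff ?mulr1 // mulf_neq0.
Qed.

Lemma ZKT_unitmx K : ZKT v alpha n K -> K \in unitmx.
Proof.
move=> [e e0 [k [[_ uk] _] ->]].
by rewrite unitmxE unitfE -mulmxE det_mulmx mulf_neq0 ?tmat_det ?norm_form_neq0 ?unit_o_neq0.
Qed.

Lemma ZKTZ x g : x != 0 -> ZKT v alpha n g -> ZKT v alpha n (x *: g).
Proof.
move=> x0 [[e1 e2] e0 [k hk ->]]; exists (x * e1, x * e2).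
  apply: contra_neq e0 => -[/eqP]; rewrite mulf_eq0 (negbTE x0) => /eqP-> /eqP.
  by rewrite mulf_eq0 (negbTE x0) => /eqP->.
by exists k => //; rewrite (tmat_scale x (e1, e2)) scalerAl.
Qed.

Lemma ZKT_mx2 p q r s : in_o v p -> in_o v q -> in_o v r -> in_o v s ->
  unit_o v (p * s - q * r) ->
  val_ge v (r + alpha * q) n%:Z -> val_ge v (s - p) n%:Z -> ZKT v alpha n (mx2 p q r s).
Proof.
move=> hp hq hr hs uD c1 c2.
set N := p * p + alpha * (q * q).
have uN : unit_o v N.
  have -> : N = (p * s - q * r) - (p * (s - p) - q * (r + alpha * q)) by rewrite /N; ring.
  apply: unit_oDr uD _; apply: val_geN; apply: (@val_ge_le _ n%:Z); last by lia.
  by apply: val_geB; apply: val_geMl.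
have N0 := unit_o_neq0 uN.
have iNV := unit_o_in (unit_oV uN).
exists (p, q); first by apply: contra_neq N0 => -[p0 q0]; rewrite /N p0 q0; ring.
exists (mx2 (1 + N^-1 * (- q * (r + alpha * q))) (N^-1 * (- q * (s - p)))
            (N^-1 * (p * (r + alpha * q))) (1 + N^-1 * (p * (s - p)))).
  by apply: Kn_mx2; apply: val_geMl iNV _; apply: val_geMl; rewrite ?in_oN.
by rewrite /tmat mx2_mul /=; apply: mx2_eq; rewrite /N in N0 *; field.
Qed.

Definition trw (Y : 'M[F]_2) := \tr (walpha alpha * Y).

Lemma trw_mx2 a b c d : trw (mx2 a b c d) = c - alpha * b.
Proof. by rewrite /trw /walpha mx2_mul mx2_tr; ring. Qed.

Lemma trwZ x (Y : 'M[F]_2) : trw (x *: Y) = x * trw Y.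
Proof. by rewrite /trw -scalerAr mxtraceZ. Qed.

Variables (C : fieldType) (psi : F -> C) (theta : F * F -> C) (a : F).
Variable chi : 'M[F]_2 -> C.
Hypothesis psiD : forall x y, psi (x + y) = psi x * psi y.
Hypothesis psi_o : forall x, in_o v x -> psi x = 1.
Hypothesis psi_nontriv : exists z, val_ge v z (-1) /\ psi z != 1.
Hypothesis a_unit : unit_o v a.
Hypothesis theta1 : theta (1, 0) = 1.
Hypothesis chi_theta : is_chi_theta_T v alpha unif n theta psi a chi.

Lemma psi_neq0 x : psi x != 0.
Proof.
apply/eqP => px; have := psiD x (- x).
by rewrite subrr psi_o ?in_o0 // px mul0r; apply/eqP; rewrite oner_eq0.
Qed.

Lemma ZKT_1_unifXZ (Y : 'M[F]_2) : in_M2o v Y -> ZKT v alpha n (1 + unif ^+ n *: Y).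
Proof.
move=> hY; exists (1, 0); first by apply/eqP => -[] /eqP; rewrite oner_eq0.
by exists (1 + unif ^+ n *: Y); rewrite ?tmat1 ?mul1r //; apply: Kn_1_unifXZ.
Qed.

Lemma chi_1_unifXZ (Y : 'M[F]_2) : in_M2o v Y ->
  chi (1 + unif ^+ n *: Y) = psi (unif ^- n * a * trw Y).
Proof.
move=> hY; have e0 : ((1 : F), (0 : F)) != (0, 0) by apply/eqP => -[] /eqP; rewrite oner_eq0.
by have := chi_theta e0 hY; rewrite tmat1 mul1r theta1 mul1r.
Qed.

Lemma unit_two_of_conductor : conductorE v theta n.*2 ->
  (forall u : F * F, in_oE v u ->
     psi (etr (emul alpha (escal (unif ^- n * a)) (emul alpha (esqrt F) u))) =
     theta (eadd (escal 1) (emul alpha (escal (unif ^+ n)) u))) ->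
  unit_o v 2%:R.
Proof.
move=> [_ conductor_min] a_theta; apply/unit_oP; split.
  by rewrite -addn1 natrD; apply: in_oD in_o1 in_o1.
move=> two_p; have lt : ((n.*2).-1 < n.*2)%N by rewrite prednK ?double_gt0.
apply: (conductor_min _ lt) => -[e1 e2] /andP[_] /andP[/= he1 he2].
rewrite addr0 in he2.
pose u := ((e1 - 1) * unif ^- n, e2 * unif ^- n).
have hu : in_oE v u.
  by apply/andP; split; [move: he1 | move: he2] =>
    /val_geM /(_ (val_ge_unifXV n)) /val_ge_le; apply; lia.
have := a_theta u hu.
have -> : eadd (escal 1) (emul alpha (escal (unif ^+ n)) u) = (e1, e2).
  by rewrite /eadd /emul /escal /u /=; congr pair; field; apply: unifX_neq0.
move=> <-; apply: psi_o.
have -> : etr (emul alpha (escal (unif ^- n * a)) (emul alpha (esqrt F) u)) =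
    2%:R * (- (alpha * a)) * (unif ^- n * unif ^- n) * e2.
  by rewrite /etr /emul /escal /esqrt /u /= mulr2n; ring.
have alpha_a : in_o v (- (alpha * a)) by apply/in_oN/in_oM; apply: unit_o_in.
have := val_geM (val_geM (val_geMr two_p alpha_a)
  (val_geM (val_ge_unifXV n) (val_ge_unifXV n))) he2.
by move/val_ge_le; apply; lia.
Qed.

(** * -alpha is not a square modulo p *)

Hypothesis v_complete : val_complete v.
Hypothesis two_unit : unit_o v 2%:R.

Definition newton (s : F) := s - (s * s + alpha) / (2%:R * s).

Lemma newton_step s (k : nat) : unit_o v s -> val_ge v (s * s + alpha) k.+1 ->
  [/\ val_ge v (newton s - s) k.+1, unit_o v (newton s)
    & val_ge v (newton s * newton s + alpha) k.+2].
Proof.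
move=> us hs; have s0 := unit_o_neq0 us.
set t := (s * s + alpha) / (2%:R * s).
have ht : val_ge v t k.+1.
  by rewrite /t mulrC; apply: val_geMl hs; apply/unit_o_in/unit_oV/unit_oM.
have -> : newton s = s - t by [].
have sqr : (s - t) * (s - t) + alpha = t * t.
  by rewrite /t; field; rewrite s0 unit_o_neq0.
split; first by rewrite addrC addKr; apply: val_geN.
  by apply: unit_oDr us _; apply: val_geN; apply: val_ge_le ht _; lia.
by rewrite sqr; apply: val_ge_le (val_geM ht ht) _; lia.
Qed.

Lemma newton_iter z : unit_o v z -> val_ge v (z * z + alpha) 1 -> forall k : nat,
  unit_o v (iter k newton z) /\
  val_ge v (iter k newton z * iter k newton z + alpha) k.+1.
Proof. by move=> uz hz; elim=> [//|k [uk hk]]; case: (newton_step uk hk). Qed.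

Lemma unit_sqr_add_alpha z : in_o v z -> unit_o v (z * z + alpha).
Proof.
move=> hz; apply/unit_oP; split; first exact: in_oD (in_oM hz hz) (unit_o_in alpha_unit).
move=> hf; have uz : unit_o v z.
  apply/unit_oP; split=> // hz1; case/unit_oP: alpha_unit => _; apply.
  rewrite -[alpha](addKr (z * z)) addrC; apply: val_geB hf _.
  by apply: val_ge_le (val_geM hz1 hz1) _; lia.
pose s (j : nat) := iter j newton z.
have us (j : nat) := (newton_iter uz hf j).1.
have hs (j : nat) := (newton_iter uz hf j).2.
have [l hl] : exists l, val_converges v s l.
  apply/v_complete/val_cauchy_step => j.
  by case: (newton_step (us j) (hs j)).
apply: (negP (alpha_nonsq l)); rewrite -subr_eq0 opprK; apply/eqP/val_ge_eq0 => m m0.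
have [N hN] := hl m; pose i := maxn N `|m|%N.
(* s i + l is written 2 s i - (s i - l) to exhibit it as integral *)
have -> : l * l + alpha = (s i * s i + alpha) - (s i - l) * (s i + s i - (s i - l)).
  by ring.
apply: val_geB; first by apply: val_ge_le (hs i) _; have := leq_maxr N `|m|%N; lia.
rewrite -[m]addr0; apply: val_geM (hN _ (leq_maxl _ _)) _.
apply: in_oB; first by apply: in_oD; apply/unit_o_in/us.
exact: in_o_val_ge (hN _ (leq_maxl _ _)) m0.
Qed.

Lemma unit_norm_form x y : in_o v x -> in_o v y -> x = 1 \/ y = 1 ->
  unit_o v (x * x + alpha * (y * y)).
Proof.
move=> hx hy [->|->]; last by rewrite !mulr1; apply: unit_sqr_add_alpha.
rewrite mulr1; have [y_p|y_np] := boolP (val_ge v y 1).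
  apply: unit_oDr unit_o1 _; apply: val_geMl (unit_o_in alpha_unit) _.
  by apply: val_ge_le (val_geM y_p y_p) _; lia.
have uy : unit_o v y by apply/unit_oP; split => //; apply/negP.
have y0 := unit_o_neq0 uy.
have -> : 1 + alpha * (y * y) = (y * y) * (y^-1 * y^-1 + alpha) by field.
exact: unit_oM (unit_oM uy uy) (unit_sqr_add_alpha (unit_o_in (unit_oV uy))).
Qed.

(** * Intertwining with distinct traces *)

Definition trw_separating (g : 'M[F]_2) := exists Y, exists Y',
  [/\ in_M2o v Y, in_M2o v Y', Y * g = g * Y' & ~ val_ge v (trw Y - trw Y') n%:Z].

Lemma trw_separatingZ x g : trw_separating g -> trw_separating (x *: g).
Proof.
move=> [Y [Y' [hY hY' hYg hn]]]; exists Y, Y'; split=> //.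
by rewrite -scalerAr -scalerAl hYg.
Qed.

Lemma trw_separating_adj p q r s (E : 'M[F]_2) :
  in_o v p -> in_o v q -> in_o v r -> in_o v s -> in_M2o v E ->
  ~ val_ge v (trw ((p * s - q * r) *: E) -
              trw (mx2 s (- q) (- r) p * E * mx2 p q r s)) n%:Z ->
  trw_separating (mx2 p q r s).
Proof.
move=> hp hq hr hs hE hsep.
(* adj(g) = mx2 s (-q) (-r) p and g adj(g) = det g *)
exists ((p * s - q * r) *: E), (mx2 s (- q) (- r) p * E * mx2 p q r s); split=> //.
- by apply: in_M2oZ hE; apply: in_oB; apply: in_oM.
- by apply/in_M2oM/in_M2o_mx2/hs/hr/hq/hp/in_M2oM/hE/in_M2o_mx2; rewrite ?in_oN.
- by rewrite (mx2_eta E) mx2_scale !mx2_mul; apply: mx2_eq; ring.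
Qed.

Lemma trw_separating_det_nonunit p q r s :
  in_o v p -> in_o v q -> in_o v r -> in_o v s ->
  [\/ p = 1, q = 1, r = 1 | s = 1] -> val_ge v (p * s - q * r) 1 ->
  trw_separating (mx2 p q r s).
Proof.
move=> hp hq hr hs one hD.
have [pq|rs] : (p = 1 \/ q = 1) \/ (r = 1 \/ s = 1) by case: one; tauto.
  apply: (@trw_separating_adj _ _ _ _ (mx2 0 0 1 0)) => //.
    by apply: in_M2o_mx2; rewrite ?in_o0 ?in_o1.
  rewrite mx2_scale !mx2_mul !trw_mx2.
  set X := (X in ~ val_ge v X _).
  have -> : X = - ((p * p + alpha * (q * q)) - (p * s - q * r)) by rewrite /X; ring.
  move/val_geN; rewrite opprK; apply: unit_o_not_val_ge.
  exact: unit_oDr (unit_norm_form hp hq pq) (val_geN hD).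
apply: (@trw_separating_adj _ _ _ _ (mx2 0 1 0 0)) => //.
  by apply: in_M2o_mx2; rewrite ?in_o0 ?in_o1.
rewrite mx2_scale !mx2_mul !trw_mx2.
set X := (X in ~ val_ge v X _).
have -> : X = (r * r + alpha * (s * s)) - alpha * (p * s - q * r) by rewrite /X; ring.
apply/unit_o_not_val_ge/unit_oDr; first exact: unit_norm_form.
exact/val_geN/(val_geMl (unit_o_in alpha_unit) hD).
Qed.

Lemma trw_separating_det_unit p q r s :
  in_o v p -> in_o v q -> in_o v r -> in_o v s -> unit_o v (p * s - q * r) ->
  ~ ZKT v alpha n (mx2 p q r s) -> trw_separating (mx2 p q r s).
Proof.
move=> hp hq hr hs uD nZ.
have [c1|c1] := boolP (val_ge v (r + alpha * q) n%:Z); last first.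
  exists (mx2 p 0 r 0), (mx2 p q 0 0).
  split; try by apply: in_M2o_mx2; rewrite ?in_o0.
    by rewrite !mx2_mul; apply: mx2_eq; ring.
  by rewrite !trw_mx2 (_ : _ - _ = r + alpha * q) 1?[RHS]addrC; [apply/negP | ring].
have [c2|c2] := boolP (val_ge v (s - p) n%:Z); last first.
  exists (mx2 q 0 s 0), (mx2 0 0 p q).
  split; try by apply: in_M2o_mx2; rewrite ?in_o0.
    by rewrite !mx2_mul; apply: mx2_eq; ring.
  by rewrite !trw_mx2 (_ : _ - _ = s - p); [apply/negP | ring].
by case: nZ; apply: ZKT_mx2.
Qed.

Lemma trw_separating_primitive p q r s :
  in_o v p -> in_o v q -> in_o v r -> in_o v s -> [\/ p = 1, q = 1, r = 1 | s = 1] ->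
  ~ ZKT v alpha n (mx2 p q r s) -> trw_separating (mx2 p q r s).
Proof.
move=> hp hq hr hs one nZ.
have [hD|hD] := boolP (val_ge v (p * s - q * r) 1); first exact: trw_separating_det_nonunit.
apply: trw_separating_det_unit => //; apply/unit_oP; split; last exact/negP.
by apply: in_oB; apply: in_oM.
Qed.

Lemma trw_separating_of_notZKT g : g \in unitmx -> ~ ZKT v alpha n g -> trw_separating g.
Proof.
move=> gu nZ.
have nz : has (fun x => x != 0) [:: g 0 0; g 0 1; g 1 0; g 1 1].
  apply/negPn/negP; rewrite -all_predC /= !negbK => /and5P[/eqP a0 /eqP b0 /eqP c0 /eqP d0 _].
  by move: gu; rewrite unitmxE unitfE (mx2_eta g) mx2_det a0 b0 c0 d0 mul0r subrr eqxx.
have [x [xs x0 hx]] := seq_min_val nz.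
have int y : y \in [:: g 0 0; g 0 1; g 1 0; g 1 1] -> in_o v (x^-1 * y).
  move=> /hx hy; rewrite /in_o -(addNr (v x)); apply: val_geM hy.
  by rewrite val_geP ?invr_eq0 // vV.
have eg : g = x *: mx2 (x^-1 * g 0 0) (x^-1 * g 0 1) (x^-1 * g 1 0) (x^-1 * g 1 1).
  by rewrite mx2_scale !mulrA divff // !mul1r -mx2_eta.
rewrite eg in nZ *; apply/trw_separatingZ/trw_separating_primitive;
  try by apply: int; rewrite !inE eqxx ?orbT.
  move: xs; rewrite !inE => /or4P[] /eqP <-;
    [apply: Or41 | apply: Or42 | apply: Or43 | apply: Or44]; exact: mulVf.
by apply: contra_not nZ; apply: ZKTZ.
Qed.

Lemma exists_ZKT_twist g : g \in unitmx -> ~ ZKT v alpha n g ->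
  exists K1, exists K2,
    [/\ ZKT v alpha n K1, ZKT v alpha n K2, K1 * g = g * K2 & chi K1 != chi K2].
Proof.
move=> gu nZ.
have [Y [Y' [hY hY' hYg nc]]] := trw_separating_of_notZKT gu nZ.
have [z [hz psi_z]] := psi_nontriv.
have c0 := val_ge_neq0 nc.
have z0 : z != 0 by apply: contra_neq psi_z => ->; apply: psi_o in_o0.
have a0 := unit_o_neq0 a_unit.
(* x is integral as v z >= -1 and v (trw Y - trw Y') < n *)
pose x := z * unif ^+ n / (a * (trw Y - trw Y')).
have x0 : x != 0 by rewrite !mulf_neq0 ?invr_eq0 ?mulf_neq0 ?unifX_neq0.
have hx : in_o v x.
  rewrite /in_o val_geP // /x !vM ?mulf_neq0 ?invr_eq0 ?mulf_neq0 ?unifX_neq0 //.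
  rewrite vV ?mulf_neq0 // vM // v_unifX; case/andP: a_unit => _ /eqP ->.
  by move: hz nc; rewrite !val_geP //; lia.
have [xY xY'] := (in_M2oZ hx hY, in_M2oZ hx hY').
exists (1 + unif ^+ n *: (x *: Y)), (1 + unif ^+ n *: (x *: Y')); split.
- exact: ZKT_1_unifXZ.
- exact: ZKT_1_unifXZ.
- by rewrite mulrDl mulrDr mul1r mulr1 -!scalerAl -!scalerAr hYg.
rewrite !chi_1_unifXZ // !trwZ.
have -> : unif ^- n * a * (x * trw Y) = z + unif ^- n * a * (x * trw Y').
  rewrite -[trw Y](subrK (trw Y')) /x; field.
  by rewrite a0 c0 unifX_neq0.
rewrite psiD; apply: contra_neq psi_z => h.
by apply: (mulIf (psi_neq0 _)); rewrite mul1r; exact: h.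
Qed.

End Valuation.

(** * Unitary matrix coefficients *)

Section UnitaryMatrixCoefficient.
Variables (F : fieldType) (C : numClosedFieldType) (V : lmodType C).
Variables (rho : 'M[F]_2 -> V -> V) (ip : V -> V -> C).
Hypothesis rho_rep : is_rep rho.
Hypothesis ip_inv : is_inv_inner_product rho ip.

Lemma ip0l z : ip 0 z = 0.
Proof.
case: ip_inv => ipD _ _ _.
by have := ipD (-1) z z z; rewrite scaleN1r addNr mulN1r addNr.
Qed.

Lemma ipZl c x z : ip (c *: x) z = c * ip x z.
Proof. by case: ip_inv => ipD _ _ _; rewrite -[c *: x]addr0 ipD ip0l addr0. Qed.

Lemma ipZr c x z : ip z (c *: x) = c^* * ip z x.
Proof. by case: ip_inv => _ ipC _ _; rewrite ipC ipZl rmorphM /= -ipC. Qed.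

Lemma rhoZ g c x : g \in unitmx -> rho g (c *: x) = c *: rho g x.
Proof.
case: rho_rep => rhoL _ _ gu.
have rho0 : rho g 0 = 0.
  by have := rhoL g gu (-1) x x; rewrite !scaleN1r !addNr.
by rewrite -[c *: x]addr0 rhoL // rho0 addr0.
Qed.

Lemma eigen_mul_conj g c x : g \in unitmx -> x != 0 -> rho g x = c *: x -> c * c^* = 1.
Proof.
case: ip_inv => _ _ ip_pos ip_rho gu x0 gx.
apply: (mulIf (lt0r_neq0 (ip_pos x x0))).
by rewrite mul1r -{2}(ip_rho g gu x x) gx ipZl ipZr mulrA.
Qed.

Lemma coef_eigen g c x : x != 0 -> rho g x = c *: x -> ip (rho g x) x / ip x x = c.
Proof.
case: ip_inv => _ _ ip_pos _ x0 ->.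
by rewrite ipZl mulfK // lt0r_neq0 // ip_pos.
Qed.

Lemma coef_eq0_of_twisted_eigen g K1 K2 c1 c2 x :
  g \in unitmx -> K1 \in unitmx -> K2 \in unitmx -> K1 * g = g * K2 ->
  x != 0 -> rho K1 x = c1 *: x -> rho K2 x = c2 *: x -> c1 != c2 ->
  ip (rho g x) x = 0.
Proof.
case: rho_rep ip_inv => _ _ rhoM [_ _ _ ip_rho] gu u1 u2 hK x0 h1 h2 c12.
set X := ip (rho g x) x.
have eX : X = c2 * c1^* * X.
  by rewrite {1}/X -(ip_rho K1 u1) -rhoM // hK rhoM // h2 rhoZ // h1 ipZl ipZr mulrA.
have e : c1 * X = c2 * X.
  by rewrite {1}eX !mulrA [c1 * c2]mulrC -(mulrA c2) (eigen_mul_conj u1 x0 h1) mulr1.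
apply: (mulfI (_ : c1 - c2 != 0)); first by rewrite subr_eq0.
by rewrite mulr0 mulrBl e subrr.
Qed.

End UnitaryMatrixCoefficient.

Theorem proposition3p2
  (F : fieldType) (v : F -> int) (unif : F) (C : numClosedFieldType)
  (psi : F -> C) (n : nat) (alpha : F) (theta : F * F -> C) (a : F)
  (chi : 'M[F]_2 -> C) (V : lmodType C) (rho : 'M[F]_2 -> V -> V)
  (ip : V -> V -> C) (v0 : V) :
  (* F, o, p, unif, odd residue cardinality; psi *)
  nonarch_local_field_odd v unif ->
  std_add_char v psi ->
  (1 <= n)%N ->
  (* inert torus T_alpha in canonical form *)
  unit_o v alpha -> (forall z : F, z * z != - alpha) ->
  (* theta_pi : character of E^x, a(theta_pi) = 2n, trivial on F^x *)
  is_charE alpha theta ->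
  conductorE v theta n.*2 ->
  (forall x : F, x != 0 -> theta (escal x) = 1) ->
  (* a_{theta,T} *)
  unit_o v a ->
  (forall u : F * F, in_oE v u ->
     psi (etr (emul alpha (escal (unif ^- n * a)) (emul alpha (esqrt F) u))) =
     theta (eadd (escal 1) (emul alpha (escal (unif ^+ n)) u))) ->
  (* chi_pi = chi_{theta_pi,T} on ZK_T(n) *)
  is_chi_theta_T v alpha unif n theta psi a chi ->
  (* pi : a representation of G with trivial central character, *)
  (* pi ~= c-Ind_{ZK_T(n)}^G chi_{theta_pi,T}                     *)
  is_rep rho ->
  (forall z : F, z != 0 -> forall x : V, rho (z%:M) x = x) ->
  iso_cInd rho (ZKT v alpha n) chi ->
  (* G-invariant inner product *)
  is_inv_inner_product rho ip ->
  (* v0 minimal vector for T *)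
  v0 != 0 ->
  (forall k, ZKT v alpha n k -> rho k v0 = chi k *: v0) ->
  forall g : 'M[F]_2, g \in unitmx ->
    (ZKT v alpha n g -> ip (rho g v0) v0 / ip v0 v0 = chi g) /\
    (~ ZKT v alpha n g -> ip (rho g v0) v0 / ip v0 v0 = 0).
Proof.
move=> [[vM val_geD] [unif0 v_unif] v_complete _ _] [psiD psi_o psi_nontriv] n_gt0
  alpha_unit alpha_nonsq _ conductor theta_F a_unit a_theta chi_theta rho_rep _ _
  ip_inv v00 v0_min g gu.
split=> [Zg|nZg]; first exact: coef_eigen (v0_min g Zg).
have two_unit := unit_two_of_conductor vM val_geD unif0 v_unif n_gt0 alpha_unit
  psi_o a_unit conductor a_theta.
have [K1 [K2 [ZK1 ZK2 hK chi12]]] := exists_ZKT_twist vM val_geD unif0 v_unif n_gt0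
  alpha_unit alpha_nonsq psiD psi_o psi_nontriv a_unit (theta_F 1 (oner_neq0 F))
  chi_theta v_complete two_unit gu nZg.
have [u1 u2] := (ZKT_unitmx alpha_nonsq ZK1, ZKT_unitmx alpha_nonsq ZK2).
by rewrite (coef_eq0_of_twisted_eigen rho_rep ip_inv gu u1 u2 hK v00
  (v0_min _ ZK1) (v0_min _ ZK2) chi12) mul0r.
Qed.
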